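(* Let $V$ be a locally convex space, $\Omega\subset V$ open, and $g$ a Riemannian metric on $\Omega$ with Levi–Civita connection $D=d+A$ of class $C^1$ and curvature $R$. Let $I\subset\mathbb R$ be an interval, $x\in C^2(I,\Omega)$ a geodesic, $\xi\in C^1(I,V)$, and $\tau\in I$. Suppose there is a collection $H$ of Jacobi fields $\eta$ along $x|J_\eta$, where $J_\eta\subset I$ is a neighborhood of $\tau$, such that each $\eta\in H$ vanishes at $\tau$ and $\{\dot\eta(\tau)\colon\eta\in H\}$ is dense in $V$. Then for every $\eta\in H$ the function $t\mapsto g\big(x(t),\xi(t),\eta(t)\big)$ is twice differentiable at $\tau$, and $D_{\dot x}\xi(\tau)=0$ if and only if $$ \frac{d^2}{dt^2}g\big(x(t),\xi(t),\eta(t)\big)\Big|_{t=\tau}=0\qquad\text{for all }\eta\in H. $$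
   Context: All locally convex spaces are real, Hausdorff and sequentially complete. $f$ is $C^1$ if directional derivatives $df(v,\xi)=\lim_{t\to0}(f(v+t\xi)-f(v))/t$ exist and $df$ is continuous; $C^k$ inductively. A Riemannian metric on $\Omega$ is a map $g\colon\Omega\times V\times V\to\mathbb R$ with each $g(v,\cdot,\cdot)$ positive definite symmetric bilinear. For a $C^1$ metric $g$, a Levi–Civita connection is $D_\xi\varphi(v)=d\varphi(v,\xi)+A(v,\xi)\varphi(v)$ with $A(v,\xi)$ a continuous linear map $V\to V$, linear in $\xi$, $(v,\xi,w)\mapsto A(v,\xi)w$ continuous, $A(v,\xi)\eta=A(v,\eta)\xi$, and $\xi g(\cdot,\varphi,\psi)=g(\cdot,D_\xi\varphi,\psi)+g(\cdot,\varphi,D_\xi\psi)$ for all $\xi\in V$, $\varphi,\psi\in C^1(\Omega,V)$; it is of class $C^k$ if $(v,\xi,w)\mapsto A(v,\xi)w$ is $C^k$. Its curvature is $R(v,\xi,\eta)=(\xi A(\cdot,\eta))(v)-(\eta A(\cdot,\xi))(v)+A(v,\xi)A(v,\eta)-A(v,\eta)A(v,\xi)$. For $x\in C^1(I,\Omega)$ and $\varphi\in C^1(I,V)$, $D_{\dot x}\varphi(t)=\dot\varphi(t)+A\big(x(t),\dot x(t)\big)\varphi(t)$ (dot is $d/dt$). A geodesic is a $C^2$ curve with $D_{\dot x}\dot x=0$. A Jacobi field along a geodesic $x$ (on an interval $J$) is $\varphi\in C^2(J,V)$ with $D_{\dot x}^2\varphi=R(x,\dot x,\varphi)\dot x$.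 *)

From HB Require Import structures.
From mathcomp Require Import all_boot all_order all_algebra.
From mathcomp Require Import all_classical all_reals all_analysis.
Set Implicit Arguments. Unset Strict Implicit. Unset Printing Implicit Defensive.
Import Order.TTheory GRing.Theory Num.Theory.
Import numFieldNormedType.Exports.
Local Open Scope classical_set_scope.
Local Open Scope ring_scope.

Section Defs.
Variable R : realType.

(** Limits and convergence in a tvs (tvsType is not a pointed type, so the
    library's [lim]/[cvg] do not apply; we use the same definitions with the
    default point 0). *)
Definition tcvg (W : tvsType R) (F : set_system W) : Prop := exists l : W, F --> l.
Definition tlim (W : tvsType R) (F : set_system W) : W := xget 0 (fun l : W => F --> l).

Definition seq_complete (V : tvsType R) : Prop :=
  forall u : nat -> V, cauchy (fmap u \oo) -> tcvg (u @ \oo).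

Definition dquot (U W : tvsType R) (f : U -> W) (v xi : U) (t : R) : W :=
  t^-1 *: (f (v + t *: xi) - f v).

Definition dirder (U W : tvsType R) (f : U -> W) (v xi : U) : W :=
  tlim (dquot f v xi t @[t --> (0 : R)^']).

Definition dd (U W : tvsType R) (f : U -> W) (p : U * U) : W := dirder f p.1 p.2.

Fixpoint Ck (k : nat) : forall (U W : tvsType R), set U -> (U -> W) -> Prop :=
  match k with
  | 0 => fun U W O f => forall v, O v -> {for v, continuous f}
  | k'.+1 => fun U W O f =>
      (forall v xi, O v -> tcvg (dquot f v xi t @[t --> (0 : R)^'])) /\
      Ck k' (O `*` setT) (dd f)
  end.

(** Derivatives of curves c : I -> W, taken within the interval I
    (one-sided at endpoints of I). *)
Definition cquot (W : tvsType R) (c : R -> W) (t0 t : R) : W :=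
  (t - t0)^-1 *: (c t - c t0).

Definition cderivable (W : tvsType R) (I : set R) (c : R -> W) (t0 : R) : Prop :=
  tcvg (cquot c t0 t @[t --> within (I `\ t0) (nbhs t0)]).

Definition cder (W : tvsType R) (I : set R) (c : R -> W) (t0 : R) : W :=
  tlim (cquot c t0 t @[t --> within (I `\ t0) (nbhs t0)]).

Fixpoint Ccurve (k : nat) (W : tvsType R) (I : set R) (c : R -> W) : Prop :=
  match k with
  | 0 => {within I, continuous c}
  | k'.+1 => (forall t, I t -> cderivable I c t) /\ Ccurve k' I (cder I c)
  end.

Definition twice_derivable_at (W : tvsType R) (J : set R) (f : R -> W) (tau : R) : Prop :=
  (exists2 e : R, 0 < e & forall t, J t -> `|t - tau| < e -> cderivable J f t) /\
  cderivable J (cder J f) tau.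

Variable V : tvsType R.

Definition riemannian_metric (O : set V) (g : V -> V -> V -> R) : Prop :=
  forall v, O v ->
    [/\ forall a xi eta zeta, g v (a *: xi + eta) zeta = a * g v xi zeta + g v eta zeta,
        forall a xi eta zeta, g v zeta (a *: xi + eta) = a * g v zeta xi + g v zeta eta,
        forall xi eta, g v xi eta = g v eta xi
      & forall xi, xi != 0 -> 0 < g v xi xi].

Definition uncurry3 (W : tvsType R) (h : V -> V -> V -> W) (p : V * V * V) : W :=
  h p.1.1 p.1.2 p.2.

(** D_xi phi (v) = d phi (v, xi) + A(v, xi) phi(v);  A v xi w stands for A(v,xi)w *)
Definition cov_der (A : V -> V -> V -> V) (phi : V -> V) (v xi : V) : V :=
  dirder phi v xi + A v xi (phi v).

Definition levi_civita (O : set V) (g : V -> V -> V -> R) (A : V -> V -> V -> V) : Prop :=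
  [/\
      (forall v xi, O v -> linear (A v xi) /\ continuous (A v xi)),
      (forall v w, O v -> linear (fun xi => A v xi w)),
      Ck 0 (O `*` setT `*` setT) (uncurry3 A),
      (forall v xi eta, O v -> A v xi eta = A v eta xi)
    &
      (forall (xi : V) (phi psi : V -> V), Ck 1 O phi -> Ck 1 O psi ->
         forall v, O v ->
           dquot (fun u => g u (phi u) (psi u)) v xi t @[t --> (0 : R)^'] -->
             g v (cov_der A phi v xi) (psi v) + g v (phi v) (cov_der A psi v xi))].

Definition curvature (A : V -> V -> V -> V) (v xi eta w : V) : V :=
  dirder (fun u => A u eta w) v xi - dirder (fun u => A u xi w) v eta
  + A v xi (A v eta w) - A v eta (A v xi w).

Definition cov_der_curve (A : V -> V -> V -> V) (I : set R) (x phi : R -> V) (t : R) : V :=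
  cder I phi t + A (x t) (cder I x t) (phi t).

Definition geodesic (O : set V) (A : V -> V -> V -> V) (I : set R) (x : R -> V) : Prop :=
  [/\ Ccurve 2 I x, (forall t, I t -> O (x t))
    & forall t, I t -> cov_der_curve A I x (cder I x) t = 0].

Definition jacobi_field (A : V -> V -> V -> V) (J : set R) (x phi : R -> V) : Prop :=
  Ccurve 2 J phi /\
  forall t, J t ->
    cov_der_curve A J x (cov_der_curve A J x phi) t =
    curvature A (x t) (cder J x t) (phi t) (cder J x t).

End Defs.

(* Write f(t) = g(x(t); xi(t), eta(t)).  Metric compatibility of D along x is the
   product rule f' = g(x; D xi, eta) + g(x; xi, D eta).  At tau, where eta = 0, the
   first term has derivative g(x; D xi, eta') and the second one
   g(x; D xi, D eta) + g(x; xi, D^2 eta), where D eta(tau) = eta'(tau) and, by the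
   Jacobi equation, D^2 eta(tau) = R(x, x', 0) x' = 0.  Hence
   f''(tau) = 2 g(x(tau); D xi(tau), eta'(tau)), and as the eta'(tau) are dense and
   g(x(tau); D xi(tau), .) is continuous, all of these vanish iff D xi(tau) = 0.
   Since g is C^1 only in the sense of directional derivatives, its derivatives
   along curves are obtained from the mean value theorem on lines. *)

From HB Require Import structures.
From mathcomp Require Import all_boot all_order all_algebra.
From mathcomp Require Import all_classical all_reals all_analysis.
From mathcomp Require Import ring lra.
Import Order.TTheory GRing.Theory Num.Theory.
Import numFieldNormedType.Exports.
Local Open Scope classical_set_scope.
Local Open Scope ring_scope.

Set Implicit Arguments. Unset Strict Implicit. Unset Printing Implicit Defensive.

Local Notation punct J t0 := (within (J `\ t0) (nbhs t0)).

Lemma openX (T U : topologicalType) (A : set T) (B : set U) :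
  open A -> open B -> open (A `*` B).
Proof.
move=> oA oB; rewrite openE => -[a b] [Aa Bb].
by exists (A, B) => //; split; apply: open_nbhs_nbhs.
Qed.

Section TvsLimits.
Context {R : realType} (W : tvsType R) {T : Type} (F : set_system T).

Lemma tvs_cvgD {FF : Filter F} (f h : T -> W) (a b : W) :
  f i @[i --> F] --> a -> h i @[i --> F] --> b -> f i + h i @[i --> F] --> a + b.
Proof.
move=> fa hb; apply: (cvg_comp _ (fun z : W * W => z.1 + z.2) (cvg_pair fa hb)).
exact: (@add_continuous W (a, b)).
Qed.

Lemma tvs_cvgZ {FF : Filter F} (k : T -> R) (f : T -> W) (c : R) (a : W) :
  k i @[i --> F] --> c -> f i @[i --> F] --> a -> k i *: f i @[i --> F] --> c *: a.
Proof.
move=> kc fa.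
apply: (cvg_comp (fun i => (k i : R^o, f i)) (fun z : R^o * W => z.1 *: z.2) (cvg_pair kc fa)).
exact: (@scale_continuous R W (c : R^o, a)).
Qed.

End TvsLimits.

Section Tlim.
Context {R : realType} (W : tvsType R).

Lemma cvg_tlim (F : set_system W) {PF : ProperFilter F} (l : W) :
  hausdorff_space W -> F --> l -> tlim F = l.
Proof.
move=> hW Fl; rewrite /tlim; case: xgetP => [l' _ Fl'|/(_ l) //].
exact: (cvg_unique hW Fl' Fl).
Qed.

Lemma tcvg_tlim (F : set_system W) : tcvg F -> F --> tlim F.
Proof. by case=> l Fl; rewrite /tlim; case: xgetP => [l' _ //|/(_ l)]. Qed.

Lemma dirder_cst (U : tvsType R) (v xi : U) (b : W) :
  hausdorff_space W -> dirder (fun=> b) v xi = 0.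
Proof.
move=> hW; rewrite /dirder (_ : dquot _ _ _ = fun=> 0); first exact: cvg_tlim (cvg_cst _).
by apply/funext => t; rewrite /dquot subrr scaler0.
Qed.

Lemma dirder_dir0 (U : tvsType R) (f : U -> W) (v : U) :
  hausdorff_space W -> dirder f v 0 = 0.
Proof.
move=> hW; rewrite /dirder (_ : dquot _ _ _ = fun=> 0); first exact: cvg_tlim (cvg_cst _).
by apply/funext => t; rewrite /dquot scaler0 addr0 subrr scaler0.
Qed.

End Tlim.

Section Punctured.
Context {R : realType}.
Implicit Types (J K : set R).

Lemma interval_point_near K (t u d : R) :
  is_interval K -> K t -> K u -> u != t -> 0 < d ->
  exists2 v, K v /\ v != t & `|t - v| < d.
Proof.
move=> Ki Kt Ku ut d0.
have ut0 : 0 < `|u - t| by rewrite normr_gt0 subr_eq0.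
pose r := d / (d + 2 * `|u - t|).
have r0 : 0 < r by rewrite divr_gt0 //; lra.
have r1 : r * (d + 2 * `|u - t|) = d by rewrite /r mulfVK // gt_eqF //; lra.
exists (t + r * (u - t)); first split.
- case: (ltgtP t u) => [tu|ut'|tu]; last by rewrite tu eqxx in ut.
  + by apply: (Ki t u Kt Ku); apply/andP; split; nra.
  + by apply: (Ki u t Ku Kt); apply/andP; split; nra.
- by rewrite addrC -subr_eq0 addrK mulf_eq0 negb_or gt_eqF //= subr_eq0.
- by rewrite opprD addNKr normrN normrM (gtr0_norm r0); nra.
Qed.

Lemma punct_proper K (t u : R) :
  is_interval K -> K t -> K u -> u != t -> ProperFilter (punct K t).
Proof.
move=> Ki Kt Ku ut; apply: within_nbhs_proper => B /nbhs_normP [d /= d0 Bd].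
have [v [Kv vt] tv] := interval_point_near Ki Kt Ku ut d0.
by exists v; split; [split => //; apply/eqP | exact: Bd].
Qed.

Lemma punct_neq J t0 : \forall t \near punct J t0, J t /\ t != t0.
Proof.
have : punct J t0 (J `\ t0) by apply: withinT.
by apply: filterS => t [Jt /eqP].
Qed.

Lemma punct_sub0 J t0 : t - t0 @[t --> punct J t0] --> 0.
Proof.
apply: cvg_within_filter.
have : t - t0 @[t --> t0] --> t0 - t0 by apply: cvgB; [exact: cvg_id | exact: cvg_cst].
by rewrite subrr.
Qed.

Lemma punct_subset (W : topologicalType) J K t0 (f : R -> W) (l : W) :
  J `<=` K -> f t @[t --> punct K t0] --> l -> f t @[t --> punct J t0] --> l.
Proof.
move=> JK fl U /fl; apply: within_subset.
by move=> t [Jt t0t]; split => //; exact: JK.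
Qed.

Lemma interval_point_neq (K L : set R) (t0 e : R) :
  is_interval K -> (exists a b, [/\ K a, K b & a < b]) -> K t0 -> 0 < e ->
  (forall t, K t -> `|t - t0| < e -> L t) -> exists2 u, L u & u != t0.
Proof.
move=> Ki [a [b [Ka Kb ab]]] Kt0 e0 KL.
have [v Kv v_neq] : exists2 v, K v & v != t0.
  by case: (eqVneq a t0) => [<-|]; [exists b => //; rewrite gt_eqF | exists a].
have [w [Kw w_neq] t0w] := interval_point_near Ki Kt0 Kv v_neq e0.
by exists w => //; apply: KL => //; rewrite distrC.
Qed.

End Punctured.

Section CurveQuotients.
Context {R : realType} (W : tvsType R).
Implicit Types (J K : set R) (c : R -> W).

Lemma cquot_cvg_continuous J c t0 (l : W) :
  cquot c t0 t @[t --> punct J t0] --> l -> c t @[t --> punct J t0] --> c t0.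
Proof.
move=> cl.
have : c t0 + (t - t0) *: cquot c t0 t @[t --> punct J t0] --> c t0 + 0 *: l.
  by apply: tvs_cvgD; [exact: cvg_cst | exact: tvs_cvgZ (punct_sub0 J t0) cl].
rewrite scale0r addr0; apply: cvg_trans; apply: near_eq_cvg.
apply: filterS (punct_neq J t0) => t [_ tt0].
by rewrite /cquot scalerA mulfV ?subr_eq0 // scale1r addrC subrK.
Qed.

Lemma cderivable_subset J K c t0 :
  J `<=` K -> cderivable K c t0 -> cquot c t0 t @[t --> punct J t0] --> cder K c t0.
Proof. by move=> JK /tcvg_tlim; exact: punct_subset. Qed.

Lemma cder_subset J K c t0 : hausdorff_space W -> ProperFilter (punct J t0) ->
  J `<=` K -> cderivable K c t0 -> cder J c t0 = cder K c t0.
Proof. by move=> hW PJ JK /(cderivable_subset JK); exact: cvg_tlim. Qed.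

End CurveQuotients.

Lemma MVT_centered {R : realType} (phi dphi : R -> R) (h : R) :
  (forall s : R, `|s| <= `|h| -> is_derive s 1 phi (dphi s)) ->
  exists2 z, `|z| <= `|h| & phi h - phi 0 = dphi z * h.
Proof.
move=> dphi_h.
have mvt (a b : R) : a <= b -> (forall s : R, a <= s <= b -> `|s| <= `|h|) ->
    exists2 z, `|z| <= `|h| & phi b - phi a = dphi z * (b - a).
  move=> ab sh.
  have ab_h s : s \in `[a, b] -> `|s| <= `|h| by rewrite in_itv => /sh.
  have dphi_ab s : s \in `]a, b[ -> is_derive s 1 phi (dphi s).
    by rewrite in_itv /= => /andP[/ltW sa /ltW sb]; apply/dphi_h/sh/andP.
  have phi_cont : {within `[a, b], continuous phi}.
    apply: derivable_within_continuous => s /ab_h /dphi_h ds.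
    exact: (@ex_derive _ _ _ _ _ _ _ ds).
  by have [z /ab_h] := MVT_segment ab dphi_ab phi_cont; exists z.
have [h0|h0] := leP 0 h.
- have [|z zh E] := mvt 0 h h0; last by exists z; rewrite // E subr0.
  by move=> s /andP[s0 sh]; rewrite !ger0_norm.
- have [|z zh E] := mvt h 0 (ltW h0); last by exists z; rewrite // -opprB E; ring.
  by move=> s /andP[hs s0]; rewrite !ler0_norm ?lerN2 // ltW.
Qed.

Section Segments.
Context {R : realType} (W : tvsType R) {T : Type} (F : set_system T).

Definition segment_cvg (p : W) (q : T -> W) (h : T -> R) (w : W) :=
  forall N, nbhs (p, w) N ->
  \forall i \near F, forall s, `|s| <= `|h i| -> N (p + s *: q i, q i).

Lemma segment_cvg_shrink {FF : Filter F} (p w : W) (q : T -> W) (h : T -> R) :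
  h i @[i --> F] --> 0 -> q i @[i --> F] --> w -> segment_cvg p q h w.
Proof.
move=> h0 qw N Npw.
have : (fun z : R^o * W => (p + z.1 *: z.2, z.2)) @ nbhs ((0 : R^o), w) --> (p, w).
  rewrite -[in X in _ --> X](addr0 p) -[X in _ --> (_ + X, _)](scale0r w).
  apply: cvg_pair; last exact: cvg_snd.
  apply: tvs_cvgD; first exact: cvg_cst.
  by apply: tvs_cvgZ; [exact: cvg_fst | exact: cvg_snd].
move=> /(_ _ Npw) [[B1 B2] /= [/nbhs_norm0P [d /= d0 Bd] B2w] B12].
have hd : \forall i \near F, `|h i| < d.
  by move/cvgrPdist_lt: h0 => /(_ d d0); apply: filterS => i; rewrite sub0r normrN.
near=> i => s sh; apply: (B12 (s : R^o, q i)); split => /=.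
  by apply: Bd => /=; apply: le_lt_trans sh _; near: i.
by near: i; exact: qw.
Unshelve. all: by end_near. Qed.

Lemma segment_cvg_null {FF : Filter F} (p : W) (q : T -> W) :
  q i @[i --> F] --> 0 -> segment_cvg p q (fun=> 1) 0.
Proof.
move=> q0 N [[N1 N2] /= [N1p N20] N12].
have : (fun z : R^o * W => p + z.1 *: z.2) @ nbhs ((0 : R^o), (0 : W)) --> p.
  rewrite -[in X in _ --> X](addr0 p) -[X in _ --> _ + X](scale0r (0 : W)).
  apply: tvs_cvgD; first exact: cvg_cst.
  by apply: tvs_cvgZ; [exact: cvg_fst | exact: cvg_snd].
move=> /(_ _ N1p) [[B1 B2] /= [/nbhs_norm0P [d /= d0 Bd] B20] B12].
have q0' : (2 / d) *: q i @[i --> F] --> 0.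
  by rewrite -(scaler0 _ (2 / d)); apply: tvs_cvgZ; [exact: cvg_cst | exact: q0].
near=> i => s; rewrite normr1 => s1; apply: (N12 (_, _)); split => /=; last first.
  by near: i; exact: q0.
(* [s *: q i] is a scalar of modulus [< d] times the small vector [(2 / d) *: q i] *)
have -> : s *: q i = (s * (d / 2)) *: ((2 / d) *: q i).
  by rewrite scalerA; congr (_ *: _); field; exact: lt0r_neq0.
apply: (B12 (_ : R^o, _)); split => /=; last by near: i; exact: q0'.
apply: Bd => /=; rewrite normrM (gtr0_norm (_ : 0 < d / 2)) ?divr_gt0 //.
have := normr_ge0 s; nra.
Unshelve. all: by end_near. Qed.

End Segments.

Section C1Maps.
Context {R : realType} (W : tvsType R) (U : set W) (U_open : open U).
Context (G : W -> R) (G1 : Ck 1 U G).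

Lemma C1_is_derive_line (b q : W) (s : R) : U (b + s *: q) ->
  is_derive s 1 (fun r => G (b + r *: q)) (dd G (b + s *: q, q)).
Proof.
move=> Ub; have [l Gl] := G1.1 _ q Ub.
have quotE : (fun t : R => t^-1 *: (G (b + (t *: 1 + s) *: q) - G (b + s *: q))) =
    dquot G (b + s *: q) q.
  apply/funext => t; rewrite /dquot scalerDl addrA (addrAC b) (_ : t%:A = t) //.
  exact: mulr1.
have -> : dd G (b + s *: q, q) = l by exact: cvg_tlim _ Gl.
apply: DeriveDef; first by rewrite /derivable quotE; apply/cvg_ex; exists l.
by rewrite /derive quotE; exact: cvg_lim.
Qed.

Lemma C1_segment_quot_cvg (T : Type) (F : set_system T) {FF : Filter F}
    (p : W) (q : T -> W) (h : T -> R) (w : W) :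
  U p -> (\forall i \near F, h i != 0) -> segment_cvg F p q h w ->
  (h i)^-1 * (G (p + h i *: q i) - G p) @[i --> F] --> dd G (p, w).
Proof.
move=> Up h0 pqw; apply/cvgrPdist_lt => e e0.
have N0 : nbhs (p, w) [set z | U z.1 /\ `|dd G (p, w) - dd G z| < e].
  apply: filterI.
    exists (U, setT) => /=; last by move=> [z1 z2] [].
    by split; [exact: open_nbhs_nbhs | exact: filterT].
  by move/cvgrPdist_lt: (G1.2 (p, w) (conj Up I)); apply.
near=> i.
have hi0 : h i != 0 by near: i.
have near_pw s : `|s| <= `|h i| ->
    U (p + s *: q i) /\ `|dd G (p, w) - dd G (p + s *: q i, q i)| < e.
  by move: s; near: i; exact: (pqw _ N0).
have [z zh E] := MVT_centered (fun s sh => C1_is_derive_line (near_pw s sh).1).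
rewrite /= scale0r addr0 in E.
by rewrite E mulrCA mulVf // mulr1; exact: (near_pw z zh).2.
Unshelve. all: by end_near. Qed.

(* [Ck 1] does not require continuity of G itself; it follows from dG(p, 0) = 0. *)
Lemma C1_cvg (T : Type) (F : set_system T) {FF : Filter F} (y : T -> W) (p : W) :
  U p -> y i @[i --> F] --> p -> G (y i) @[i --> F] --> G p.
Proof.
move=> Up yp.
have q0 : y i - p @[i --> F] --> 0.
  by rewrite -(subrr p); apply: tvs_cvgD => //; exact: cvg_cst.
have one_neq0 : \forall i \near F, (1 : R) != 0 by apply: nearW => i; exact: oner_neq0.
have Gq : 1^-1 * (G (p + 1 *: (y i - p)) - G p) @[i --> F] --> 0.
  rewrite -(dirder_dir0 G p) //.
  exact: C1_segment_quot_cvg Up one_neq0 (segment_cvg_null q0).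
have : G p + 1^-1 * (G (p + 1 *: (y i - p)) - G p) @[i --> F] --> G p + 0.
  by apply: cvgD => //; exact: cvg_cst.
rewrite addr0; apply: cvg_trans; apply: near_eq_cvg.
by apply: nearW => i /=; rewrite invr1 mul1r scale1r addrC subrK addrC subrK.
Qed.

Lemma C1_chain_curve (J : set R) (c : R -> W) (t0 : R) (w : W) :
  U (c t0) -> cquot c t0 t @[t --> punct J t0] --> w ->
  cquot (G \o c) t0 t @[t --> punct J t0] --> dd G (c t0, w).
Proof.
move=> Uc cw.
have h0 : \forall t \near punct J t0, t - t0 != 0.
  by apply: filterS (punct_neq J t0) => t [_]; rewrite subr_eq0.
apply: cvg_trans _ (C1_segment_quot_cvg Uc h0 (segment_cvg_shrink (punct_sub0 J t0) cw)).
apply: near_eq_cvg; apply: filterS (punct_neq J t0) => t [_ tt0].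
by rewrite /cquot /= scalerA mulfV ?subr_eq0 // scale1r (addrC (c t0)) subrK.
Qed.

End C1Maps.

Lemma dirder_eq0_open {R : realType} (U W : tvsType R) (O : set U) (f : U -> W) (v xi : U) :
  hausdorff_space W -> open O -> O v -> (forall u, O u -> f u = 0) -> dirder f v xi = 0.
Proof.
move=> hW oO Ov f0; apply: cvg_tlim hW _.
have : v + t *: xi @[t --> (0 : R)^'] --> v + 0 *: xi.
  apply: tvs_cvgD; first exact: cvg_cst.
  by apply: tvs_cvgZ; [exact: cvg_within_filter cvg_id | exact: cvg_cst].
rewrite scale0r addr0 => vt.
have near_O : \forall t \near (0 : R)^', O (v + t *: xi).
  by apply: vt; exact: open_nbhs_nbhs.
have quot0 : \forall t \near (0 : R)^', (fun=> 0 : W) t = dquot f v xi t.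
  by apply: filterS near_O => t Ot; rewrite /dquot !f0 // subrr scaler0.
apply: cvg_trans (near_eq_cvg quot0) _; exact: cvg_cst.
Qed.

Lemma Ck1_cst {R : realType} (U W : tvsType R) (O : set U) (b : W) :
  hausdorff_space W -> Ck 1 O (fun=> b).
Proof.
move=> hW; have quot0 (v xi : U) : dquot (fun=> b) v xi = fun=> (0 : W).
  by apply/funext => t; rewrite /dquot subrr scaler0.
split=> [v xi _|p _]; first by exists 0; rewrite quot0; exact: cvg_cst.
have -> : dd (fun _ : U => b) = fun=> 0 by apply/funext => q; exact: dirder_cst.
exact: cst_continuous.
Qed.

Section LeviCivita.
Context {R : realType} (V : tvsType R) (V_hausdorff : hausdorff_space V).
Context (O : set V) (O_open : open O) (g : V -> V -> V -> R) (A : V -> V -> V -> V).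
Hypotheses (hg : riemannian_metric O g) (hg1 : Ck 1 (O `*` setT `*` setT) (uncurry3 g)).
Hypothesis hA : levi_civita O g A.

Local Notation O3 := (O `*` [set: V] `*` [set: V]).
Local Notation G := (uncurry3 g).

Let O3_open : open O3.
Proof. exact: openX (openX O_open openT) openT. Qed.

Let O3_intro v b d : O v -> O3 (v, b, d).
Proof. by []. Qed.

Section AtPoint.
Variables (v : V) (Ov : O v).

Let metric_scalarl z : scalar (g v ^~ z).
Proof. by move=> a x y; case: (hg Ov) => gl _ _ _; exact: gl. Qed.

Let metric_scalarr z : scalar (g v z).
Proof. by move=> a x y; case: (hg Ov) => _ gr _ _; exact: gr. Qed.

Lemma metricBl x y z : g v (x - y) z = g v x z - g v y z.
Proof. exact: (zmod_morphism_linear (metric_scalarl z)). Qed.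

Lemma metricBr x y z : g v z (x - y) = g v z x - g v z y.
Proof. exact: (zmod_morphism_linear (metric_scalarr z)). Qed.

Lemma metricDl x y z : g v (x + y) z = g v x z + g v y z.
Proof. exact: (GRing.semilinear_linear (metric_scalarl z)).2. Qed.

Lemma metricDr x y z : g v z (x + y) = g v z x + g v z y.
Proof. exact: (GRing.semilinear_linear (metric_scalarr z)).2. Qed.

Lemma metricZl a x z : g v (a *: x) z = a * g v x z.
Proof. exact: (scalable_linear (metric_scalarl z)). Qed.

Lemma metricZr a x z : g v z (a *: x) = a * g v z x.
Proof. exact: (scalable_linear (metric_scalarr z)). Qed.

Lemma metric0l z : g v 0 z = 0.
Proof. by have := metricBl 0 0 z; rewrite subrr => ->; rewrite subrr. Qed.

Lemma metric0r z : g v z 0 = 0.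
Proof. by have := metricBr 0 0 z; rewrite subrr => ->; rewrite subrr. Qed.

Lemma connection0r xi : A v xi 0 = 0.
Proof.
case: hA => /(_ v xi Ov) [/zmod_morphism_linear Al _] _ _ _ _.
by have := Al 0 0; rewrite subrr => ->; rewrite subrr.
Qed.

Lemma connectionZr xi a w : A v xi (a *: w) = a *: A v xi w.
Proof. by case: hA => /(_ v xi Ov) [/scalable_linear Al _] _ _ _ _; exact: Al. Qed.

Lemma connection0l w : A v 0 w = 0.
Proof.
case: hA => _ /(_ v w Ov) /zmod_morphism_linear Al _ _ _.
by have := Al 0 0; rewrite subrr => ->; rewrite subrr.
Qed.

End AtPoint.

Lemma curvature0 v xi w : O v -> curvature A v xi 0 w = 0.
Proof.
move=> Ov; rewrite /curvature dirder_dir0 //.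
rewrite (@dirder_eq0_open _ _ _ O (fun u => A u 0 w)) //.
  by rewrite !connection0l // connection0r // !subr0 addr0.
by move=> u Ou; exact: connection0l.
Qed.

(* Metric compatibility applied to the constant fields b and d. *)
Lemma metric_dd_base (v b d a : V) :
  O v -> dd G ((v, b, d), (a, 0, 0)) = g v (A v a b) d + g v b (A v a d).
Proof.
move=> Ov; case: hA => _ _ _ _.
move=> /(_ a _ _ (Ck1_cst O b V_hausdorff) (Ck1_cst O d V_hausdorff) v Ov).
rewrite /cov_der !dirder_cst // !add0r => compat.
rewrite /dd /dirder /= (_ : dquot G _ _ = dquot (fun u => g u b d) v a).
  exact: cvg_tlim _ compat.
by apply/funext => t; rewrite /dquot /uncurry3 /= !scaler0 !addr0.
Qed.

Lemma cquot_metric_split (a b d : R -> V) (t0 t : R) : O (a t) ->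
  cquot (fun s => g (a s) (b s) (d s)) t0 t =
  g (a t) (cquot b t0 t) (d t) + g (a t) (b t0) (cquot d t0 t)
  + cquot (fun s => g (a s) (b t0) (d t0)) t0 t.
Proof.
move=> Oat; rewrite /cquot metricZl // metricZr // metricBl // metricBr //.
rewrite -[LHS]/((t - t0)^-1 * _) -[X in _ = _ + X]/((t - t0)^-1 * _); ring.
Qed.

Lemma metric_product_rule (J : set R) (t0 : R) (a b d : R -> V) (a' b' d' : V) :
  (forall t, J t -> O (a t)) -> O (a t0) ->
  cquot a t0 t @[t --> punct J t0] --> a' ->
  cquot b t0 t @[t --> punct J t0] --> b' ->
  cquot d t0 t @[t --> punct J t0] --> d' ->
  cquot (fun t => g (a t) (b t) (d t)) t0 t @[t --> punct J t0] -->
    g (a t0) (b' + A (a t0) a' (b t0)) (d t0) + g (a t0) (b t0) (d' + A (a t0) a' (d t0)).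
Proof.
move=> Oa Oa0 aa' bb' dd'.
have [ca cd] := (cquot_cvg_continuous aa', cquot_cvg_continuous dd').
have gb : g (a t) (cquot b t0 t) (d t) @[t --> punct J t0] --> g (a t0) b' (d t0).
  apply: (C1_cvg O3_open hg1 (y := fun t => (a t, cquot b t0 t, d t))
    (p := (a t0, b', d t0))) => //.
  exact: cvg_pair (cvg_pair ca bb') cd.
have gd : g (a t) (b t0) (cquot d t0 t) @[t --> punct J t0] --> g (a t0) (b t0) d'.
  apply: (C1_cvg O3_open hg1 (y := fun t => (a t, b t0, cquot d t0 t))
    (p := (a t0, b t0, d'))) => //.
  exact: cvg_pair (cvg_pair ca (cvg_cst _)) dd'.
have ga : cquot (fun s => g (a s) (b t0) (d t0)) t0 t @[t --> punct J t0] -->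
    g (a t0) (A (a t0) a' (b t0)) (d t0) + g (a t0) (b t0) (A (a t0) a' (d t0)).
  rewrite -metric_dd_base //.
  apply: (C1_chain_curve O3_open hg1 (c := fun s => (a s, b t0, d t0))) => //.
  have -> : cquot (fun s => (a s, b t0, d t0)) t0 = fun t => (cquot a t0 t, 0, 0).
    apply/funext => t; rewrite -[LHS]/((t - t0)^-1 *: (a t - a t0),
      (t - t0)^-1 *: (b t0 - b t0), (t - t0)^-1 *: (d t0 - d t0)).
    by rewrite !subrr !scaler0.
  exact: cvg_pair (cvg_pair aa' (cvg_cst _)) (cvg_cst _).
rewrite metricDl // metricDr // addrACA.
apply: cvg_trans (cvgD (cvgD gb gd) ga); apply: near_eq_cvg.
by apply: filterS (punct_neq J t0) => t [Jt _]; rewrite cquot_metric_split //; exact: Oa.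
Qed.

Lemma metric_cquot_vanishing (J : set R) (t0 : R) (a b d : R -> V) (d' : V) :
  (forall t, J t -> O (a t)) -> O (a t0) -> d t0 = 0 ->
  a t @[t --> punct J t0] --> a t0 -> b t @[t --> punct J t0] --> b t0 ->
  cquot d t0 t @[t --> punct J t0] --> d' ->
  cquot (fun t => g (a t) (b t) (d t)) t0 t @[t --> punct J t0] --> g (a t0) (b t0) d'.
Proof.
move=> Oa Oa0 d0 aa0 bb0 dd'.
apply: cvg_trans (C1_cvg O3_open hg1 (y := fun t => (a t, b t, cquot d t0 t))
  (p := (a t0, b t0, d')) (O3_intro _ _ Oa0) (cvg_pair (cvg_pair aa0 bb0) dd')).
apply: near_eq_cvg; apply: filterS (punct_neq J t0) => t [Jt _].
by rewrite /cquot /uncurry3 /= d0 metric0r // !subr0 metricZr //; exact: Oa.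
Qed.

Lemma metric_orthogonal_dense (v u : V) (S : set V) :
  O v -> closure S = setT -> (forall w, S w -> g v u w = 0) -> u = 0.
Proof.
move=> Ov dS u_perp; apply/eqP/negP => /negP u_neq0.
have guu : 0 < g v u u by case: (hg Ov) => _ _ _; apply.
have gu_cont : g v u w @[w --> u] --> g v u u.
  apply: (C1_cvg O3_open hg1 (y := fun w => (v, u, w)) (p := (v, u, u))) => //.
  exact: cvg_pair (cvg_pair (cvg_cst _) (cvg_cst _)) cvg_id.
have near_u : \forall w \near u, `|g v u u - g v u w| < g v u u.
  by move/cvgrPdist_lt: gu_cont; apply.
have : closure S u by rewrite dS.
by move=> /(_ _ near_u) [w [Sw /=]]; rewrite (u_perp w Sw) subr0 gtr0_norm // ltxx.
Qed.

End LeviCivita.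

Section JacobiField.
Context {R : realType} (V : tvsType R) (V_hausdorff : hausdorff_space V).
Context (O : set V) (O_open : open O) (g : V -> V -> V -> R) (A : V -> V -> V -> V).
Hypotheses (hg : riemannian_metric O g) (hg1 : Ck 1 (O `*` setT `*` setT) (uncurry3 g)).
Hypothesis hA : levi_civita O g A.
Context (I : set R) (x xi : R -> V) (tau : R).
Hypotheses (hx : geodesic O A I x) (hxi : Ccurve 1 I xi).
Context (J : set R) (eta : R -> V) (u : R).
Hypotheses (J_itv : is_interval J) (JI : J `<=` I) (Jtau : J tau).
Hypotheses (Ju : J u) (u_neq : u != tau).
Hypotheses (jac : jacobi_field A J x eta) (eta0 : eta tau = 0).

Local Notation f := (fun t => g (x t) (xi t) (eta t)).
Local Notation Dxi := (cov_der_curve A I x xi).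
Local Notation Deta := (cov_der_curve A J x eta).

Let punct_J_proper t : J t -> ProperFilter (punct J t).
Proof.
move=> Jt; case: (eqVneq u t) => [<-|ut]; last exact: punct_proper J_itv Jt Ju ut.
by apply: punct_proper J_itv Ju Jtau _; rewrite eq_sym.
Qed.

Let Ox t : J t -> O (x t).
Proof. by move=> /JI; case: hx => _ Ox _; exact: Ox. Qed.

Let x_cquot t : J t -> cquot x t s @[s --> punct J t] --> cder I x t.
Proof. by move=> /JI It; case: hx => [[dx _] _ _]; exact: cderivable_subset JI (dx t It). Qed.

Let xi_cquot t : J t -> cquot xi t s @[s --> punct J t] --> cder I xi t.
Proof. by move=> /JI It; case: hxi => dxi _; exact: cderivable_subset JI (dxi t It). Qed.

Let eta_cquot t : J t -> cquot eta t s @[s --> punct J t] --> cder J eta t.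
Proof. by move=> Jt; case: jac => [[deta _] _]; exact: tcvg_tlim (deta t Jt). Qed.

Let cderJ_x t : J t -> cder J x t = cder I x t.
Proof.
move=> Jt; case: hx => [[dx _] _ _].
exact: (cder_subset V_hausdorff (punct_J_proper Jt) JI (dx t (JI Jt))).
Qed.

Lemma jacobi_metric_cquot t : J t ->
  cquot f t s @[s --> punct J t] --> g (x t) (Dxi t) (eta t) + g (x t) (xi t) (Deta t).
Proof.
move=> Jt; rewrite /cov_der_curve (cderJ_x Jt).
exact: (metric_product_rule V_hausdorff O_open hg hg1 hA Ox (Ox Jt)
  (x_cquot Jt) (xi_cquot Jt) (eta_cquot Jt)).
Qed.

Lemma jacobi_metric_cder t : J t ->
  cder J f t = g (x t) (Dxi t) (eta t) + g (x t) (xi t) (Deta t).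
Proof.
by move=> Jt; have PJt := punct_J_proper Jt; exact: cvg_tlim _ (jacobi_metric_cquot Jt).
Qed.

Let x_cvg_tau : x t @[t --> punct J tau] --> x tau.
Proof. exact: cquot_cvg_continuous (x_cquot Jtau). Qed.

Let cder_x_cvg_tau : cder I x t @[t --> punct J tau] --> cder I x tau.
Proof.
case: hx => [[_ [ddx _]] _ _]; apply: punct_subset JI _.
exact: cquot_cvg_continuous (tcvg_tlim (ddx tau (JI Jtau))).
Qed.

Let connection_cvg_tau (q r : R -> V) (q0 r0 : V) :
  q t @[t --> punct J tau] --> q0 -> r t @[t --> punct J tau] --> r0 ->
  A (x t) (q t) (r t) @[t --> punct J tau] --> A (x tau) q0 r0.
Proof.
move=> qq0 rr0; case: hA => _ _ /(_ (x tau, q0, r0)) A_cont _ _.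
apply: cvg_comp (cvg_pair (cvg_pair x_cvg_tau qq0) rr0) (A_cont _).
by split; [split; [exact: Ox|]|].
Qed.

Lemma cov_der_cvg_tau : Dxi t @[t --> punct J tau] --> Dxi tau.
Proof.
apply: tvs_cvgD.
  case: hxi => _ /subspace_continuousP/(_ tau (JI Jtau)) dxi_cont U /dxi_cont.
  by apply: within_subset => t [Jt _]; exact: JI.
exact: connection_cvg_tau cder_x_cvg_tau (cquot_cvg_continuous (xi_cquot Jtau)).
Qed.

Lemma jacobi_cov_der_cquot_tau : cquot Deta tau t @[t --> punct J tau] -->
  cder J (cder J eta) tau + A (x tau) (cder I x tau) (cder J eta tau).
Proof.
have ddeta : cquot (cder J eta) tau t @[t --> punct J tau] --> cder J (cder J eta) tau.
  by case: jac => [[_ [ddeta _]] _]; exact: tcvg_tlim (ddeta tau Jtau).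
apply: cvg_trans _ (tvs_cvgD ddeta (connection_cvg_tau cder_x_cvg_tau (eta_cquot Jtau))).
apply: near_eq_cvg; apply: filterS (punct_neq J tau) => t [Jt _].
rewrite /cquot /cov_der_curve (cderJ_x Jt) (cderJ_x Jtau) eta0 subr0.
by rewrite (connection0r hA (Ox Jtau)) (connectionZr hA (Ox Jt)) addr0 -scalerDr addrAC.
Qed.

Lemma jacobi_cov_der2_tau : cder J Deta tau + A (x tau) (cder I x tau) (Deta tau) = 0.
Proof.
case: jac => _ /(_ tau Jtau) jac_tau.
rewrite -(cderJ_x Jtau) -[LHS]/(cov_der_curve A J x Deta tau) jac_tau eta0.
exact: (curvature0 V_hausdorff O_open hA _ _ (Ox Jtau)).
Qed.

Lemma jacobi_metric_cquot2_tau :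
  cquot (cder J f) tau t @[t --> punct J tau] --> g (x tau) (Dxi tau) (cder J eta tau) *+ 2.
Proof.
have Oxtau := Ox Jtau.
have Deta_tau : Deta tau = cder J eta tau.
  by rewrite /cov_der_curve eta0 (connection0r hA Oxtau) addr0.
have Deta_cder : cder J Deta tau =
    cder J (cder J eta) tau + A (x tau) (cder I x tau) (cder J eta tau).
  by have PJ := punct_J_proper Jtau; exact: cvg_tlim V_hausdorff jacobi_cov_der_cquot_tau.
have vanishing := metric_cquot_vanishing O_open hg hg1 Ox Oxtau eta0
  x_cvg_tau cov_der_cvg_tau (eta_cquot Jtau).
have product := metric_product_rule V_hausdorff O_open hg hg1 hA Ox Oxtau
  (x_cquot Jtau) (xi_cquot Jtau) jacobi_cov_der_cquot_tau.
rewrite -Deta_cder jacobi_cov_der2_tau (metric0r hg Oxtau) addr0 Deta_tau in product.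
rewrite mulr2n; apply: cvg_trans _ (tvs_cvgD vanishing product).
apply: near_eq_cvg; apply: filterS (punct_neq J tau) => t [Jt _].
rewrite /cquot !jacobi_metric_cder // eta0 (metric0r hg Oxtau).
by rewrite add0r subr0 -scalerDr addrA.
Qed.

Lemma jacobi_metric_twice_derivable : twice_derivable_at J f tau.
Proof.
split; last by eexists; exact: jacobi_metric_cquot2_tau.
by exists 1 => // t Jt _; eexists; exact: (jacobi_metric_cquot Jt).
Qed.

Lemma jacobi_metric_cder2_tau :
  cder J (cder J f) tau = g (x tau) (Dxi tau) (cder J eta tau) *+ 2.
Proof. by have PJ := punct_J_proper Jtau; exact: cvg_tlim _ jacobi_metric_cquot2_tau. Qed.

End JacobiField.

Theorem lemma7p2 (R : realType) (V : tvsType R)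
  (V_hausdorff : hausdorff_space V) (V_seqc : seq_complete V)
  (O : set V) (O_open : open O)
  (g : V -> V -> V -> R) (A : V -> V -> V -> V)
  (hg : riemannian_metric O g) (hg1 : Ck 1 (O `*` setT `*` setT) (uncurry3 g))
  (hA : levi_civita O g A) (hA1 : Ck 1 (O `*` setT `*` setT) (uncurry3 A))
  (I : set R) (hI : is_interval I) (hI2 : exists a b, [/\ I a, I b & a < b])
  (x : R -> V) (hx : geodesic O A I x)
  (xi : R -> V) (hxi : Ccurve 1 I xi)
  (tau : R) (htau : I tau)
  (H : set (set R * (R -> V)))
  (hH : forall Je, H Je ->
     [/\ is_interval Je.1, Je.1 `<=` I,
         (exists2 e : R, 0 < e & forall t, I t -> `|t - tau| < e -> Je.1 t),
         jacobi_field A Je.1 x Je.2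
       & Je.2 tau = 0])
  (hdense : closure [set cder Je.1 Je.2 tau | Je in H] = setT) :
  (forall Je, H Je ->
     twice_derivable_at Je.1 (fun t => g (x t) (xi t) (Je.2 t)) tau) /\
  (cov_der_curve A I x xi tau = 0 <->
   forall Je, H Je ->
     cder Je.1 (cder Je.1 (fun t => g (x t) (xi t) (Je.2 t))) tau = 0).
Proof.
have Oxtau : O (x tau) by case: hx => _ Ox _; exact: Ox.
pose Dxi := cov_der_curve A I x xi tau.
have jacobi Je : H Je ->
    twice_derivable_at Je.1 (fun t => g (x t) (xi t) (Je.2 t)) tau /\
    cder Je.1 (cder Je.1 (fun t => g (x t) (xi t) (Je.2 t))) tau =
      g (x tau) Dxi (cder Je.1 Je.2 tau) *+ 2.
  case/hH => J_itv JI [e e0 J_near] jac eta0.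
  have Jtau : Je.1 tau by apply: J_near; rewrite // subrr normr0.
  have [u Ju u_neq] := interval_point_neq hI hI2 htau e0 J_near.
  split.
  - exact: (jacobi_metric_twice_derivable V_hausdorff O_open hg hg1 hA hx hxi
      J_itv JI Jtau Ju u_neq jac eta0).
  - exact: (jacobi_metric_cder2_tau V_hausdorff O_open hg hg1 hA hx hxi
      J_itv JI Jtau Ju u_neq jac eta0).
split=> [Je /jacobi [] //|]; split=> [Dxi0 Je /jacobi [_ ->]|f''0].
  by rewrite /Dxi Dxi0 (metric0l hg Oxtau) mul0rn.
apply: (metric_orthogonal_dense O_open hg hg1 Oxtau hdense) => _ [Je HJe <-].
by have [_ /eqP] := jacobi Je HJe; rewrite f''0 // eq_sym mulrn_eq0 => /eqP.
Qed.
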